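(* Let the sequence $\gamma(0),\gamma(1),\dots$ be defined by $\gamma(0)=0$ and recursively $$\gamma(2^l-k)=\frac{2^l+2(-1)^l}{3}-k+2\gamma(k)\qquad (l\ge 0,\ 0\le k\le 2^{l-1}).$$ For a positive integer $n$ let $b(n)$ be the number of maximal blocks of consecutive ones in the binary representation of $n$, and $b(0)=0$. Then: (i) $\gamma(2^l+k)=\frac{2^l+2(-1)^l}{3}-k+4\gamma(k)$ for all integers $l\ge0$ and $0\le k\le 2^{l-1}$; (ii) $\gamma(2^l-k)=\gamma(k)+2\gamma(2^{l-1}-k)$ for all integers $l\ge 0$ and integers $k$ with $2^{l-2}\le k\le 2^{l-1}$; (iii) $\gamma(2^l+k)=1+\gamma(2^l+k-1)+2\gamma(2^l-k)-2\gamma(2^l+1-k)$ for all integers $l\ge0$ and $1\le k\le 2^l$; (iv) for all $n\in\mathbf{N}$, $\gamma(2n)=n-\gamma(n)$ and $\gamma(2n+1)=\gamma(2n)+(2^{1+2b(n)}+1)/3=n-\gamma(n)+(2^{1+2b(n)}+1)/3$; and for all $n\ge1$, $\gamma(2n-1)=\gamma(2n)+(4^{b(2n-1)}-1)/3=n-\gamma(n)+(4^{b(2n-1)}-1)/3$.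
   Context: For example $667=(1010011011)_2$ has $b(667)=4$. Equivalently $b$ satisfies $b(0)=0$, $b(2n)=b(n)$, $b(2n+1)=b(n)+1-(n\bmod 2)$. *)

From mathcomp Require Import all_boot all_algebra.
Set Implicit Arguments. Unset Strict Implicit. Unset Printing Implicit Defensive.
Import GRing.Theory Num.Theory.
Local Open Scope ring_scope.

(* The constant (2^l + 2(-1)^l)/3 (an exact integer division). *)
Definition gconst (l : nat) : int := ((2 ^+ l + 2 * (-1) ^+ l) %/ 3)%Z.

(* gamma(0) = 0 and, for n >= 1, writing n = 2^l - k with l = up_log 2 n
   (the least l with n <= 2^l), so that 0 <= k < 2^(l-1) (or l = 0, k = 0),
   gamma(n) = gconst l - k + 2 gamma(k).  The fuel argument f >= n is
   sufficient since k < n. *)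
Fixpoint gamma_aux (f n : nat) : int :=
  match f with
  | 0 => 0
  | f'.+1 =>
      if n == 0%N then 0 else
      let l := up_log 2 n in
      let k := (2 ^ l - n)%N in
      gconst l - k%:Z + 2 * gamma_aux f' k
  end.

Definition gamma (n : nat) : int := gamma_aux n n.

Definition bit (n i : nat) : bool := odd (n %/ 2 ^ i).

(* b(n): number of maximal blocks of consecutive ones in binary n, counted
   as the number of block starts: positions i with bit i = 1 and
   (i = 0 or bit (i-1) = 0).  All bits at positions > n are 0. *)
Definition nblocks (n : nat) : nat :=
  count (fun i => bit n i && ((i == 0%N) || ~~ bit n i.-1)) (iota 0 n.+1).

(* Every n >= 1 is uniquely 2^l - k with 2k < 2^l, and then k < n; so the
   defining recursion holds on the whole range 2k <= 2^l and supports an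
   induction principle.  Parts (i)-(iii) follow from one or two applications of
   the recursion together with gconst (l+1) = 2^l - gconst l.  For (iv) write
   n = 2^l - k: then 2n = 2^(l+1) - 2k and 2n +- 1 = 2^(l+1) - (2k -+ 1), which
   reduces gamma(2n) and gamma(2n +- 1) to gamma(2k) and gamma(2k -+ 1).  The
   block counts match up because 2^(l+1) - 1 - x is the complement of x on l+1
   bits, and complementing changes the number of blocks of ones only according
   to the lowest and the highest of these bits. *)

From mathcomp Require Import all_boot all_algebra zify ring.
Import GRing.Theory Num.Theory.
Set Implicit Arguments.
Unset Strict Implicit.
Unset Printing Implicit Defensive.

Definition block_start (n i : nat) : bool :=
  bit n i && ((i == 0%N) || ~~ bit n i.-1).

Lemma count_iota0S (P : pred nat) N :
  count P (iota 0 N.+1) = (P 0%N + count (P \o succn) (iota 0 N))%N.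
Proof. by rewrite /= -[1%N]/(1 + 0)%N iotaDl count_map. Qed.

Lemma bit_small n i : (n < 2 ^ i)%N -> bit n i = false.
Proof. by move=> lt_n; rewrite /bit divn_small. Qed.

Lemma bit_bit_double0 (b : bool) m : bit (b + m.*2) 0 = b.
Proof. by rewrite /bit expn0 divn1 oddD odd_double addbF oddb. Qed.

Lemma bit_bit_doubleS (b : bool) m i : bit (b + m.*2) i.+1 = bit m i.
Proof. by rewrite /bit expnS divnMA divn2 half_bit_double. Qed.

Lemma nblocks_count n N : (n < N)%N -> nblocks n = count (block_start n) (iota 0 N).
Proof.
elim: N => [//|N IHN]; rewrite ltnS leq_eqVlt => /orP[/eqP <- //|lt_nN].
rewrite -addn1 iotaD count_cat -IHN // /= /block_start bit_small ?addn0 //.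
exact: ltn_trans lt_nN (ltn_expl N (isT : (1 < 2)%N)).
Qed.

Lemma nblocks_bit_double (b : bool) m :
  nblocks (b + m.*2) = (nblocks m + (b && ~~ odd m))%N.
Proof.
rewrite (@nblocks_count _ m.*2.+2) ?(@nblocks_count m m.*2.+1); try by case: b; lia.
rewrite !count_iota0S /= -(eq_count (a1 := block_start m \o succn)); last first.
  by move=> i; rewrite /= /block_start /= !bit_bit_doubleS.
rewrite /block_start /= !bit_bit_double0 bit_bit_doubleS /bit expn0 divn1.
by case: b; case: (odd m) => /=; lia.
Qed.

Lemma nblocks_double m : nblocks (2 * m) = nblocks m.
Proof. by rewrite mul2n -[m.*2]/(false + m.*2)%N nblocks_bit_double addn0. Qed.

Lemma nblocks_pow2 l : nblocks (2 ^ l) = 1%N.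
Proof. by elim: l => [//|l IHl]; rewrite expnS nblocks_double. Qed.

Lemma nblocks_complement L x : (x < 2 ^ L.+1)%N ->
  (nblocks (2 ^ L.+1 - 1 - x) + odd x + (2 ^ L <= x) = nblocks x + 1)%N.
Proof.
elim: L x => [|L IHL] x; first by case: x => [|[|]].
rewrite -(odd_double_half x); move: (odd x) (x./2) => b y lt_x.
have {lt_x}lt_y : (y < 2 ^ L.+1)%N by move: lt_x; rewrite expnS; case: b; lia.
have -> : (2 ^ L.+2 - 1 - (b + y.*2) = ~~ b + (2 ^ L.+1 - 1 - y).*2)%N.
  by move: lt_y; rewrite [(2 ^ L.+2)%N]expnS -!mul2n; case: b; lia.
have odd_cy : odd (2 ^ L.+1 - 1 - y) = ~~ odd y.
  by rewrite ssrnat.oddB ?ssrnat.oddB ?oddX //=; lia.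
have -> : (2 ^ L.+1 <= b + y.*2)%N = (2 ^ L <= y)%N.
  by rewrite expnS -mul2n; case: b; apply/idP/idP; lia.
have := IHL y lt_y; rewrite !nblocks_bit_double oddD odd_double odd_cy.
by case: b; case: (odd y) => /=; lia.
Qed.

Lemma nblocks_complement_double L y : (y < 2 ^ L)%N ->
  (nblocks (2 ^ L.+1 - 1 - 2 * y) + (2 ^ L <= 2 * y) = nblocks y + 1)%N.
Proof.
move=> lt_y; have := @nblocks_complement L (2 * y).
by rewrite nblocks_double oddM addn0 expnS ltn_mul2l /=; apply.
Qed.

Local Open Scope ring_scope.

Lemma PoszX m l : ((m ^ l)%N)%:Z = m%:R ^+ l.
Proof. by rewrite -natz natrX. Qed.

Lemma up_log2_subn_half n : (0 < n)%N -> (2 * (2 ^ up_log 2 n - n) < 2 ^ up_log 2 n)%N.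
Proof.
case: n => [//|[|n]] _; first by rewrite up_log1.
have := up_log_bounds (isT : (1 < 2)%N) (isT : (1 < n.+2)%N).
rewrite -(prednK (up_log_gt0 2 n.+2)) expnS /=; lia.
Qed.

Lemma pow2_subn_ind (P : nat -> Prop) :
  P 0%N -> (forall l k, (2 * k < 2 ^ l)%N -> P k -> P (2 ^ l - k)%N) ->
  forall n, P n.
Proof.
move=> P0 IHP; elim/ltn_ind => -[//|n] IHn.
have lt_k := @up_log2_subn_half n.+1 isT.
have le_n := up_logP n.+1 (isT : (1 < 2)%N).
rewrite -(subKn le_n); apply: IHP => //; apply: IHn; lia.
Qed.

Lemma gamma_aux_fuel f1 f2 n :
  (n <= f1)%N -> (n <= f2)%N -> gamma_aux f1 n = gamma_aux f2 n.
Proof.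
elim: f1 f2 n => [|f IHf] [|g] n //=; rewrite ?leqn0.
- by move=> /eqP -> _; case: g.
- by move=> _ /eqP ->.
case: (posnP n) => [-> //|n_gt0 le_nf le_ng].
have lt_k := @up_log2_subn_half n n_gt0.
have le_n := up_logP n (isT : (1 < 2)%N).
by rewrite (IHf g) //; lia.
Qed.

Lemma gammaE n : (0 < n)%N ->
  gamma n = gconst (up_log 2 n) - (2 ^ up_log 2 n - n)%N%:Z
            + 2 * gamma (2 ^ up_log 2 n - n)%N.
Proof.
case: n => [//|n] _; have lt_k := @up_log2_subn_half n.+1 isT.
have le_n := up_logP n.+1 (isT : (1 < 2)%N).
by rewrite /gamma /= (@gamma_aux_fuel n (2 ^ up_log 2 n.+1 - n.+1)) //; lia.
Qed.

Lemma gamma0 : gamma 0 = 0.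
Proof. by []. Qed.

Lemma gamma1 : gamma 1 = 1.
Proof. by []. Qed.

Lemma gconst_mul3 l : gconst l * 3 = 2 ^+ l + 2 * (-1) ^+ l.
Proof.
elim: l => [//|l IHl].
have E : 2 ^+ l.+1 + 2 * (-1) ^+ l.+1 = (2 ^+ l - gconst l) * 3 :> int.
  by rewrite mulrBl IHl !exprS; ring.
by rewrite /gconst E mulzK.
Qed.

Lemma gconstS l : gconst l.+1 = 2 ^+ l - gconst l.
Proof. by apply: (@mulIf _ 3) => //; rewrite mulrBl !gconst_mul3 !exprS; ring. Qed.

Lemma gamma_pow2B_lt l k : (2 * k < 2 ^ l)%N ->
  gamma (2 ^ l - k) = gconst l - k%:Z + 2 * gamma k.
Proof.
move=> lt_k; have up_l : up_log 2 (2 ^ l - k) = l.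
  case: l lt_k => [|l] lt_k; first by have -> : k = 0%N by lia.
  by apply: up_log_eq => //; move: lt_k; rewrite expnS; lia.
rewrite gammaE; last by lia.
by rewrite up_l subKn //; lia.
Qed.

Lemma gamma_pow2 l : gamma (2 ^ l) = gconst l.
Proof.
by have := @gamma_pow2B_lt l 0; rewrite expn_gt0 subn0 gamma0 => -> //; ring.
Qed.

Lemma gamma_pow2B l k : (2 * k <= 2 ^ l)%N ->
  gamma (2 ^ l - k) = gconst l - k%:Z + 2 * gamma k.
Proof.
rewrite leq_eqVlt => /orP[/eqP eq_k|]; last exact: gamma_pow2B_lt.
case: l eq_k => [|l]; rewrite ?expnS => eq_k; first by lia.
have -> : k = (2 ^ l)%N by lia.
have -> : (2 * 2 ^ l - 2 ^ l = 2 ^ l)%N by lia.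
by rewrite gamma_pow2 gconstS PoszX; ring.
Qed.

Lemma gamma_pow2D l k : (2 * k <= 2 ^ l)%N ->
  gamma (2 ^ l + k) = gconst l - k%:Z + 4 * gamma k.
Proof.
move=> le_k; have := PoszX 2 l.
have -> : (2 ^ l + k = 2 ^ l.+1 - (2 ^ l - k))%N by rewrite expnS; lia.
rewrite gamma_pow2B ?subKn ?gamma_pow2B ?gconstS ?expnS //; lia.
Qed.

Lemma gamma_pow2B_split l k : (2 ^ l <= 4 * k)%N -> (2 * k <= 2 ^ l)%N ->
  gamma (2 ^ l - k) = gamma k + 2 * gamma (2 ^ l.-1 - k).
Proof.
case: l => [|l] /=; rewrite ?expnS => ge_k le_k; first by lia.
have := @gamma_pow2B l (2 ^ l - k); rewrite subKn; last by lia.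
move=> /(_ ltac:(lia)) gamma_k; have := PoszX 2 l.
by rewrite -expnS gamma_pow2B ?expnS // gconstS gamma_k; lia.
Qed.

Lemma gamma_pow2D_diff l k : (1 <= k)%N -> (k <= 2 ^ l)%N ->
  gamma (2 ^ l + k) =
    1 + gamma (2 ^ l + k - 1) + 2 * gamma (2 ^ l - k) - 2 * gamma (2 ^ l + 1 - k).
Proof.
move=> k_ge1 le_k; have [le_2k|lt_2k] := leqP (2 * k) (2 ^ l).
  have -> : (2 ^ l + k - 1 = 2 ^ l + (k - 1))%N by lia.
  have -> : (2 ^ l + 1 - k = 2 ^ l - (k - 1))%N by lia.
  by rewrite !gamma_pow2D ?gamma_pow2B //; lia.
have -> : (2 ^ l + k = 2 ^ l.+1 - (2 ^ l - k))%N by rewrite expnS; lia.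
have -> : (2 ^ l.+1 - (2 ^ l - k) - 1 = 2 ^ l.+1 - (2 ^ l - k).+1)%N.
  by rewrite expnS; lia.
have -> : (2 ^ l + 1 - k = (2 ^ l - k).+1)%N by lia.
by rewrite !(@gamma_pow2B l.+1) ?expnS //; lia.
Qed.

Definition repunit4 (B : nat) : int := ((4 ^+ B - 1) %/ 3)%Z.

Lemma repunit4_mul3 B : repunit4 B * 3 = 4 ^+ B - 1.
Proof.
elim: B => [//|B IHB].
have E : 4 ^+ B.+1 - 1 = (4 * repunit4 B + 1) * 3 :> int.
  by rewrite mulrDl -mulrA IHB exprS; ring.
by rewrite /repunit4 E mulzK.
Qed.

Lemma repunit4S B : repunit4 B.+1 = 4 * repunit4 B + 1.
Proof.
by apply: (@mulIf _ 3) => //; rewrite mulrDl -mulrA !repunit4_mul3 exprS; ring.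
Qed.

Lemma div3_pow2_odd B : ((2 ^+ (1 + 2 * B) + 1) %/ 3)%Z = 2 * repunit4 B + 1.
Proof.
have E : 2 ^+ (1 + 2 * B) + 1 = (2 * repunit4 B + 1) * 3 :> int.
  by rewrite mulrDl -mulrA repunit4_mul3 exprD exprM; ring.
by rewrite E mulzK.
Qed.

Lemma gamma_double n : gamma (2 * n) = n%:Z - gamma n.
Proof.
elim/pow2_subn_ind: n => [//|l k lt_k IHk].
have -> : (2 * (2 ^ l - k) = 2 ^ l.+1 - 2 * k)%N by rewrite expnS; lia.
have := PoszX 2 l.
by rewrite !gamma_pow2B ?expnS ?IHk ?gconstS //; lia.
Qed.

Lemma gamma_odd n :
  gamma (2 * n + 1) = n%:Z - gamma n + 2 * repunit4 (nblocks n) + 1 /\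
  ((0 < n)%N -> gamma (2 * n - 1) = n%:Z - gamma n + repunit4 (nblocks (2 * n - 1))).
Proof.
elim/pow2_subn_ind: n => [//|l k lt_k [IHk_add IHk_sub]].
have gamma_n := gamma_pow2B_lt lt_k.
have n_eq : (2 ^ l - k)%N%:Z = 2 ^+ l - k%:Z by rewrite -PoszX; lia.
have gconst_l1 := gconstS l.
split=> [|_].
- have [->|k_gt0] := posnP k.
    have -> : (2 * (2 ^ l - 0) + 1 = 2 ^ l.+1 + 1)%N by rewrite expnS; lia.
    rewrite gamma_pow2D; last by rewrite expnS leq_mul2l expn_gt0.
    rewrite subn0 gamma_pow2 gamma1 nblocks_pow2 PoszX gconstS.
    by rewrite (_ : repunit4 1 = 1) //; ring.
  have blocks_k : nblocks (2 * k - 1) = nblocks (2 ^ l - k).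
    have := @nblocks_complement_double l (2 ^ l - k) (ltac:(lia)).
    have -> : (2 ^ l.+1 - 1 - 2 * (2 ^ l - k) = 2 * k - 1)%N by rewrite expnS; lia.
    by rewrite (_ : 2 ^ l <= 2 * (2 ^ l - k))%N /=; lia.
  have -> : (2 * (2 ^ l - k) + 1 = 2 ^ l.+1 - (2 * k - 1))%N by rewrite expnS; lia.
  rewrite gamma_pow2B; last by rewrite expnS; lia.
  by rewrite IHk_sub // blocks_k; lia.
- have blocks_n : nblocks (2 * (2 ^ l - k) - 1) = (nblocks k).+1.
    have := @nblocks_complement_double l k (ltac:(lia)).
    have -> : (2 ^ l.+1 - 1 - 2 * k = 2 * (2 ^ l - k) - 1)%N by rewrite expnS; lia.
    by rewrite (leqNgt (2 ^ l)) lt_k /=; lia.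
  rewrite blocks_n repunit4S.
  have -> : (2 * (2 ^ l - k) - 1 = 2 ^ l.+1 - (2 * k + 1))%N by rewrite expnS; lia.
  rewrite gamma_pow2B; last by rewrite expnS; lia.
  by rewrite IHk_add; lia.
Qed.

Theorem theorem1p5 :
  (* the defining recursion holds (for all admissible l, k) *)
  (gamma 0 = 0 /\
   forall l k : nat, (2 * k <= 2 ^ l)%N ->
     gamma (2 ^ l - k) = gconst l - k%:Z + 2 * gamma k) /\
  (* (i) *)
  (forall l k : nat, (2 * k <= 2 ^ l)%N ->
     gamma (2 ^ l + k) = gconst l - k%:Z + 4 * gamma k) /\
  (* (ii) *)
  (forall l k : nat, (2 ^ l <= 4 * k)%N -> (2 * k <= 2 ^ l)%N ->
     gamma (2 ^ l - k) = gamma k + 2 * gamma (2 ^ l.-1 - k)) /\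
  (* (iii) *)
  (forall l k : nat, (1 <= k)%N -> (k <= 2 ^ l)%N ->
     gamma (2 ^ l + k) =
       1 + gamma (2 ^ l + k - 1) + 2 * gamma (2 ^ l - k)
         - 2 * gamma (2 ^ l + 1 - k)) /\
  (* (iv) *)
  (forall n : nat,
     gamma (2 * n) = n%:Z - gamma n /\
     gamma (2 * n + 1) =
       gamma (2 * n) + ((2 ^+ (1 + 2 * nblocks n) + 1) %/ 3)%Z /\
     gamma (2 * n + 1) =
       n%:Z - gamma n + ((2 ^+ (1 + 2 * nblocks n) + 1) %/ 3)%Z) /\
  (forall n : nat, (1 <= n)%N ->
     gamma (2 * n - 1) =
       gamma (2 * n) + ((4 ^+ nblocks (2 * n - 1) - 1) %/ 3)%Z /\
     gamma (2 * n - 1) =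
       n%:Z - gamma n + ((4 ^+ nblocks (2 * n - 1) - 1) %/ 3)%Z).
Proof.
split; first by split; [exact: gamma0 | exact: gamma_pow2B].
split; first exact: gamma_pow2D.
split; first exact: gamma_pow2B_split.
split; first exact: gamma_pow2D_diff.
split=> n; rewrite gamma_double.
- by rewrite div3_pow2_odd (proj1 (gamma_odd n)) !addrA.
- by move=> n_gt0; rewrite (proj2 (gamma_odd n) n_gt0).
Qed.
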